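(* Let $n\in\mathbb{Z}_+$, $\mathbf{a}=(a_n,\dots,a_{2n})\in\mathbb{C}^{n+1}$, $\theta\in\mathbb{C}$, $\lambda\in\mathbb{C}^*$, $\alpha\in\mathbb{C}\setminus\{0\}$, and $h=\xi t+\eta\in\mathbb{C}[t]$ with $\xi\neq0$. Then $\Omega(\lambda,\alpha,h)\otimes V_{\mathbf{a},\theta}\cong\mathrm{Ind}_{\theta,\lambda}(\mathbb{C}[t]_{\alpha,h,\mathbf{a}})$ as $\mathrm{Vir}$-modules.
   Context: $\mathrm{Vir}$ is the Lie algebra with basis $\{d_i,c\mid i\in\mathbb{Z}\}$ and brackets $[d_i,d_j]=(j-i)d_{i+j}+\delta_{i,-j}\frac{i^3-i}{12}c$, $[c,d_i]=0$. Operators on $\mathbb{C}[t]$: $F(f)=\frac{h(t)-h(\alpha)}{t-\alpha}f(t)-f'(t)$, $G(f)=h(\alpha)f+tF(f)$. $\Omega(\lambda,\alpha,h)$ is $\mathbb{C}[t,s]$ with $c$ acting as $0$ and $d_m(f(t)s^i)=\lambda^m(s-m)^i\big(sf+mG(f)-m^2\alpha F(f)\big)$ for $m\in\mathbb{Z}$, $i\in\mathbb{Z}_+$, $f\in\mathbb{C}[t]$; tensor products carry $x(a\otimes v)=xa\otimes v+a\otimes xv$. Let $\mathrm{Vir}_+^{(n-1)}$ be the subalgebra spanned by $\{d_i\mid i\ge n\}$; make $\mathbb{C}$ a $\mathrm{Vir}_+^{(n-1)}$-module by $d_i\cdot1=a_i$ for $n\le i\le 2n$ and $d_i\cdot1=0$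 for $i>2n$, and set $V_{\mathbf{a},\theta}=U(\mathrm{Vir})\otimes_{U(\mathrm{Vir}_+^{(n-1)})}\mathbb{C}\,/\,(c-\theta)U(\mathrm{Vir})\otimes_{U(\mathrm{Vir}_+^{(n-1)})}\mathbb{C}$. Let $\mathfrak{b}_{\lambda,n+1}=\mathrm{span}\{d_k-\lambda^{k-n}d_n\mid k\ge n+1\}$ and let $\mathbb{C}[t]_{\alpha,h,\mathbf{a}}$ be $\mathbb{C}[t]$ with $\mathfrak{b}_{\lambda,n+1}$-action $(d_k-\lambda^{k-n}d_n)\circ f=(k-n)\lambda^k\big(G(f)-(k+n)\alpha F(f)\big)+(a_k-\lambda^{k-n}a_n)f$ ($a_k:=0$ for $k>2n$). Then $\mathrm{Ind}_{\theta,\lambda}(\mathbb{C}[t]_{\alpha,h,\mathbf{a}})=U(\mathrm{Vir})\otimes_{U(\mathfrak{b}_{\lambda,n+1})}\mathbb{C}[t]_{\alpha,h,\mathbf{a}}\,/\,(c-\theta)U(\mathrm{Vir})\otimes_{U(\mathfrak{b}_{\lambda,n+1})}\mathbb{C}[t]_{\alpha,h,\mathbf{a}}$. *)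

From mathcomp Require Import all_boot all_algebra.
From mathcomp Require Import complex Rstruct.
Set Implicit Arguments. Unset Strict Implicit. Unset Printing Implicit Defensive.
Import GRing.Theory Num.Theory.
Local Open Scope ring_scope.

Definition C : fieldType := (Rdefinitions.R)[i].

Definition islin (U W : lmodType C) (f : U -> W) : Prop :=
  forall (a : C) (x y : U), f (a *: x + y) = a *: f x + f y.

(* ---------- Vir-modules ----------
   d i is the action of d_i (i : int), c the action of the central element;
   [x,y] acts as xy - yx. *)
Definition vir_module (V : lmodType C) (d : int -> V -> V) (c : V -> V) : Prop :=
  [/\ forall i, islin (d i), islin c,
      forall (i j : int) (v : V),
        d i (d j v) - d j (d i v) =
          ((j - i)%:~R : C) *: d (i + j) v
          + (if i == - j then ((i ^+ 3 - i)%:~R / 12%:R : C) *: c v else 0)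
    & forall (i : int) (v : V), c (d i v) = d i (c v)].

Definition vir_hom (V : lmodType C) (dV : int -> V -> V) (cV : V -> V)
    (W : lmodType C) (dW : int -> W -> W) (cW : W -> W) (f : V -> W) : Prop :=
  [/\ islin f, forall i v, f (dV i v) = dW i (f v) & forall v, f (cV v) = cW (f v)].

Definition hquot (al : C) (h : {poly C}) : {poly C} :=
  (h - (h.[al])%:P) %/ ('X - al%:P).

Definition Fop (al : C) (h : {poly C}) (f : {poly C}) : {poly C} :=
  hquot al h * f - f^`().

Definition Gop (al : C) (h : {poly C}) (f : {poly C}) : {poly C} :=
  h.[al] *: f + 'X * Fop al h f.

(* ---------- the module Omega(lambda, alpha, h) = C[t,s] ----------
   An element is a polynomial in s with coefficients in C[t]:
   P = \sum_i P_i(t) s^i, with P : {poly {poly C}} (outer variable = s). *)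
Definition Omega := {poly {poly C}}.
Definition cst (a : C) : Omega := (a%:P)%:P.

(* d_m (f(t) s^i) = lambda^m (s-m)^i (s f + m G(f) - m^2 alpha F(f)),
   extended linearly. *)
Definition omega_d (lam al : C) (h : {poly C}) (m : int) (P : Omega) : Omega :=
  cst (lam ^ m) *
  \sum_(i < size P)
     ('X - cst (m%:~R)) ^+ i *
     ('X * (P`_i)%:P
      + ((m%:~R : C) *: Gop al h P`_i
         - ((m ^+ 2)%:~R * al : C) *: Fop al h P`_i)%:P).

Definition omega_c (P : Omega) : Omega := 0.

Definition om_bilin (V Y : lmodType C) (b : Omega -> V -> Y) : Prop :=
  [/\ forall P Q v, b (P + Q) v = b P v + b Q v,
      forall a P v, b (cst a * P) v = a *: b P v,
      forall P u w, b P (u + w) = b P u + b P w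
    & forall a P v, b P (a *: v) = a *: b P v].

Definition is_tensor (V T : lmodType C) (beta : Omega -> V -> T) : Prop :=
  om_bilin beta /\
  forall (Y : lmodType C) (g : Omega -> V -> Y), om_bilin g ->
    (exists g' : T -> Y, islin g' /\ forall P v, g' (beta P v) = g P v) /\
    (forall g1 g2 : T -> Y, islin g1 -> islin g2 ->
       (forall P v, g1 (beta P v) = g P v) ->
       (forall P v, g2 (beta P v) = g P v) -> forall x, g1 x = g2 x).

(* ---------- V_{a,theta}, via its universal property ----------
   The generating vector w of U(Vir) (x)_{U(Vir_+^{(n-1)})} C / (c - theta):
   d_i w = a_i w (n <= i <= 2n), d_i w = 0 (i > 2n), c w = theta w. *)
Definition Va_gen (n : nat) (a : nat -> C) (th : C)
    (X : lmodType C) (dX : int -> X -> X) (cX : X -> X) (x : X) : Prop :=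
  [/\ forall i : nat, (n <= i <= 2 * n)%N -> dX (Posz i) x = a i *: x,
      forall i : nat, (2 * n < i)%N -> dX (Posz i) x = 0
    & cX x = th *: x].

Definition is_Va (n : nat) (a : nat -> C) (th : C)
    (V : lmodType C) (d : int -> V -> V) (c : V -> V) (w : V) : Prop :=
  [/\ vir_module d c, Va_gen n a th d c w &
      forall (X : lmodType C) (dX : int -> X -> X) (cX : X -> X) (x : X),
        vir_module dX cX -> Va_gen n a th dX cX x ->
        (exists f : V -> X, vir_hom d c dX cX f /\ f w = x) /\
        (forall f1 f2 : V -> X, vir_hom d c dX cX f1 -> vir_hom d c dX cX f2 ->
           f1 w = x -> f2 w = x -> forall v, f1 v = f2 v)].

Definition aext (n : nat) (a : nat -> C) (k : nat) : C :=
  if (k <= 2 * n)%N then a k else 0.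

(* the action of d_k - lambda^(k-n) d_n (k >= n+1) on C[t]_{alpha,h,a} *)
Definition bmod_act (n : nat) (a : nat -> C) (lam al : C) (h : {poly C})
    (k : nat) (f : {poly C}) : {poly C} :=
  ((k - n)%:R * lam ^+ k : C) *: (Gop al h f - ((k + n)%:R * al : C) *: Fop al h f)
  + (aext n a k - lam ^+ (k - n) * aext n a n) *: f.

(* j : C[t] -> X is a b_{lambda,n+1}-module map on which c acts as theta *)
Definition Ind_gen (n : nat) (a : nat -> C) (th lam al : C) (h : {poly C})
    (X : lmodType C) (dX : int -> X -> X) (cX : X -> X) (j : {poly C} -> X) : Prop :=
  [/\ islin j,
      forall (k : nat) (f : {poly C}), (n < k)%N ->
        j (bmod_act n a lam al h k f) = dX (Posz k) (j f) - lam ^+ (k - n) *: dX (Posz n) (j f)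
    & forall f, cX (j f) = th *: j f].

Definition is_Ind (n : nat) (a : nat -> C) (th lam al : C) (h : {poly C})
    (M : lmodType C) (d : int -> M -> M) (c : M -> M) (iota : {poly C} -> M) : Prop :=
  [/\ vir_module d c, Ind_gen n a th lam al h d c iota &
      forall (X : lmodType C) (dX : int -> X -> X) (cX : X -> X) (j : {poly C} -> X),
        vir_module dX cX -> Ind_gen n a th lam al h dX cX j ->
        (exists g : M -> X, vir_hom d c dX cX g /\ forall f, g (iota f) = j f) /\
        (forall g1 g2 : M -> X, vir_hom d c dX cX g1 -> vir_hom d c dX cX g2 ->
           (forall f, g1 (iota f) = j f) -> (forall f, g2 (iota f) = j f) ->
           forall x, g1 x = g2 x)].

(* Let w be the generator of V_{a,θ}.  The map P ↦ P ⊗ w : Ω → Ind can be built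
   directly, by induction on the s-degree: it is ι on C[t], and since d_n acts on Ω as
   λ^n s plus terms of no larger s-degree, its value on s Q is forced by
   d_n (Q ⊗ w) = d_n Q ⊗ w + a_n (Q ⊗ w).  This element of the Vir-module Hom(Ω, Ind)
   satisfies the relations defining w, so the universal property of V_{a,θ} yields a
   Vir-map f : V → Hom(Ω, Ind), and β(P, v) := f(v)(P) intertwines the tensor action.
   β is universal: a bilinear g : Ω × V → Y induces a Vir-map V → Hom(Ω, Coind Y) into
   the coinduced module, whose value at w restricted to C[t] is a b_{λ,n+1}-map; it
   extends over Ind, and uniqueness in V_{a,θ} identifies the two maps V → Hom(Ω, Coind Y).
   Two linear maps agreeing on every P ⊗ v lift to Vir-maps Ind → Coind Y agreeing on
   ι(C[t]), hence coincide. *)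

From HB Require Import structures.
From mathcomp Require Import all_boot all_algebra.
From mathcomp Require Import complex Rstruct.
From mathcomp Require Import boolp ring zify.
From Stdlib Require Import ProofIrrelevance FunctionalExtensionality.
Set Implicit Arguments. Unset Strict Implicit. Unset Printing Implicit Defensive.
Import GRing.Theory Num.Theory.
Local Open Scope ring_scope.

Section SquareZeroExtension.
Variables (R : comNzRingType) (Z : lmodType R).

(* The trivial extension [R ⋉ Z] with [(a, x) (b, y) = (a b, a y + b x)]: [Z] is a
   square-zero ideal on which scaling is ring multiplication, so identities in an
   [R]-module can be proved by [ring] after embedding. *)
Definition sqz := (R * Z)%type.
HB.instance Definition _ := GRing.Zmodule.on sqz.

Definition sqz_mul (u v : sqz) : sqz := (u.1 * v.1, u.1 *: v.2 + v.1 *: u.2).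

Lemma sqz_mulA : associative sqz_mul.
Proof.
move=> [a x] [b y] [c z]; rewrite /sqz_mul /=; congr (_, _); first by rewrite mulrA.
by rewrite !scalerDr !scalerA [c * a]mulrC [c * b]mulrC addrA.
Qed.

Lemma sqz_mulC : commutative sqz_mul.
Proof. by move=> [a x] [b y]; rewrite /sqz_mul /= mulrC addrC. Qed.

Lemma sqz_mul1 : left_id (1, 0) sqz_mul.
Proof. by move=> [a x]; rewrite /sqz_mul /= mul1r scale1r scaler0 addr0. Qed.

Lemma sqz_mulDl : left_distributive sqz_mul +%R.
Proof.
move=> [a x] [b y] [c z]; rewrite /sqz_mul /=; congr (_, _); first by rewrite mulrDl.
by rewrite scalerDl scalerDr addrACA.
Qed.

Lemma sqz_one_neq0 : ((1, 0) : sqz) != 0.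
Proof. by apply/negP => /eqP [] /eqP; rewrite oner_eq0. Qed.

HB.instance Definition _ :=
  GRing.Zmodule_isComNzRing.Build sqz sqz_mulA sqz_mulC sqz_mul1 sqz_mulDl sqz_one_neq0.

Definition sqz_vec (x : Z) : sqz := (0, x).
Definition sqz_scalar (a : R) : sqz := (a, 0).

Lemma sqz_vec_inj : injective sqz_vec. Proof. by move=> x y []. Qed.

Lemma sqz_vec0 : sqz_vec 0 = 0. Proof. by []. Qed.

Lemma sqz_vecD x y : sqz_vec (x + y) = sqz_vec x + sqz_vec y.
Proof. by rewrite /sqz_vec; congr (_, _); rewrite addr0. Qed.

Lemma sqz_vecN x : sqz_vec (- x) = - sqz_vec x.
Proof. by rewrite /sqz_vec; congr (_, _); rewrite oppr0. Qed.

Lemma sqz_vecB x y : sqz_vec (x - y) = sqz_vec x - sqz_vec y.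
Proof. by rewrite sqz_vecD sqz_vecN. Qed.

Lemma sqz_scalar_is_nmod_morphism : nmod_morphism sqz_scalar.
Proof. by split=> // a b; rewrite /sqz_scalar; congr (_, _); rewrite addr0. Qed.

Lemma sqz_scalar_is_monoid_morphism : monoid_morphism sqz_scalar.
Proof.
split=> // a b; rewrite /sqz_scalar /GRing.mul /= /sqz_mul /=.
by congr (_, _); rewrite !scaler0 addr0.
Qed.

HB.instance Definition _ :=
  GRing.isNmodMorphism.Build R sqz sqz_scalar sqz_scalar_is_nmod_morphism.
HB.instance Definition _ :=
  GRing.isMonoidMorphism.Build R sqz sqz_scalar sqz_scalar_is_monoid_morphism.

Lemma sqz_vecZ a x : sqz_vec (a *: x) = sqz_scalar a * sqz_vec x.
Proof. by rewrite /sqz_vec; congr (_, _) => /=; rewrite ?mulr0 // scaler0 addr0. Qed.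

End SquareZeroExtension.

Ltac module_ring :=
  apply: sqz_vec_inj;
  rewrite ?(sqz_vecD, sqz_vecB, sqz_vecN, sqz_vecZ, sqz_vec0); ring.

Lemma subr_eq_add (Z : zmodType) (x y z : Z) : x - y = z -> x = z + y.
Proof. by move/eqP; rewrite subr_eq => /eqP. Qed.

Section LinearMaps.
Variables (U W : lmodType C) (f : U -> W).
Hypothesis f_lin : islin f.

Lemma islinD x y : f (x + y) = f x + f y.
Proof. by have := f_lin 1 x y; rewrite !scale1r. Qed.

Lemma islin0 : f 0 = 0.
Proof. by apply: (addrI (f 0)); rewrite -islinD !addr0. Qed.

Lemma islinZ a x : f (a *: x) = a *: f x.
Proof. by have := f_lin a x 0; rewrite !addr0 islin0 addr0. Qed.

Lemma islinN x : f (- x) = - f x.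
Proof. by rewrite -scaleN1r islinZ scaleN1r. Qed.

Lemma islinB x y : f (x - y) = f x - f y.
Proof. by rewrite islinD islinN. Qed.

End LinearMaps.

Lemma islin_comp (U W Z : lmodType C) (f : U -> W) (g : W -> Z) :
  islin f -> islin g -> islin (fun x => g (f x)).
Proof. by move=> f_lin g_lin a x y; rewrite f_lin g_lin. Qed.

Lemma vir_hom_comp (U W Z : lmodType C) dU cU dW cW dZ cZ (f : U -> W) (g : W -> Z) :
  vir_hom dU cU dW cW f -> vir_hom dW cW dZ cZ g ->
  vir_hom dU cU dZ cZ (fun x => g (f x)).
Proof.
case=> f_lin fd fc [g_lin gd gc]; split; first exact: islin_comp.
  by move=> i v; rewrite fd gd.
by move=> v; rewrite fc gc.
Qed.

Lemma Va_gen_hom n a th (U W : lmodType C) dU cU dW cW (f : U -> W) x :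
  vir_hom dU cU dW cW f -> Va_gen n a th dU cU x -> Va_gen n a th dW cW (f x).
Proof.
case=> f_lin fd fc [xd xd0 xc]; split.
- by move=> i hi; rewrite -fd xd // islinZ.
- by move=> i hi; rewrite -fd xd0 // islin0.
- by rewrite -fc xc islinZ.
Qed.

Lemma Ind_gen_hom n a th lam al h (U W : lmodType C) dU cU dW cW (f : U -> W) j :
  vir_hom dU cU dW cW f -> Ind_gen n a th lam al h dU cU j ->
  Ind_gen n a th lam al h dW cW (fun p => f (j p)).
Proof.
case=> f_lin fd fc [j_lin jd jc]; split.
- exact: islin_comp.
- by move=> k p hk; rewrite jd // islinB // islinZ // !fd.
- by move=> p; rewrite -fc jc islinZ.
Qed.

Record subfun (A : Type) (Y : lmodType C) (Pr : (A -> Y) -> Prop)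
    (Pr0 : Pr (fun _ => 0))
    (PrL : forall (a : C) f g, Pr f -> Pr g -> Pr (fun x => a *: f x + g x)) :=
  SubFun { fval : A -> Y ; fvalP : Pr fval }.
Arguments SubFun {A Y Pr Pr0 PrL fval}.
Arguments fval {A Y Pr Pr0 PrL}.

Section SubspaceOfFunctions.
Variables (A : Type) (Y : lmodType C) (Pr : (A -> Y) -> Prop).
Hypothesis Pr0 : Pr (fun _ => 0).
Hypothesis PrL : forall (a : C) f g, Pr f -> Pr g -> Pr (fun x => a *: f x + g x).
Local Notation subfun := (subfun Pr0 PrL).

Lemma subfunE (u v : subfun) : (forall x, fval u x = fval v x) -> u = v.
Proof.
case: u v => f pf [g pg] /= /functional_extensionality e; subst g.
by rewrite (proof_irrelevance _ pf pg).
Qed.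

HB.instance Definition _ := gen_eqMixin subfun.
HB.instance Definition _ := gen_choiceMixin subfun.

Lemma subfun_predZ a f : Pr f -> Pr (fun x => a *: f x).
Proof.
move=> pf; have := PrL a pf Pr0; congr Pr.
by apply: functional_extensionality => x; rewrite addr0.
Qed.

Lemma subfun_predD f g : Pr f -> Pr g -> Pr (fun x => f x + g x).
Proof.
move=> pf pg; have := PrL 1 pf pg; congr Pr.
by apply: functional_extensionality => x; rewrite scale1r.
Qed.

Definition subfun0 : subfun := SubFun Pr0.
Definition subfun_add (u v : subfun) : subfun := SubFun (subfun_predD (fvalP u) (fvalP v)).
Definition subfun_scale (a : C) (u : subfun) : subfun := SubFun (subfun_predZ a (fvalP u)).
Definition subfun_opp (u : subfun) : subfun := subfun_scale (-1) u.

Lemma subfun_addA : associative subfun_add.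
Proof. by move=> u v w; apply: subfunE => x /=; rewrite addrA. Qed.
Lemma subfun_addC : commutative subfun_add.
Proof. by move=> u v; apply: subfunE => x /=; rewrite addrC. Qed.
Lemma subfun_add0 : left_id subfun0 subfun_add.
Proof. by move=> u; apply: subfunE => x /=; rewrite add0r. Qed.
Lemma subfun_addN : left_inverse subfun0 subfun_opp subfun_add.
Proof. by move=> u; apply: subfunE => x /=; rewrite scaleN1r addNr. Qed.

HB.instance Definition _ :=
  GRing.isZmodule.Build subfun subfun_addA subfun_addC subfun_add0 subfun_addN.

Lemma subfun_scaleA a b v : subfun_scale a (subfun_scale b v) = subfun_scale (a * b) v.
Proof. by apply: subfunE => x /=; rewrite scalerA. Qed.
Lemma subfun_scale1 : left_id 1 subfun_scale.
Proof. by move=> u; apply: subfunE => x /=; rewrite scale1r. Qed.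
Lemma subfun_scaleDr : right_distributive subfun_scale +%R.
Proof. by move=> a u v; apply: subfunE => x /=; rewrite scalerDr. Qed.
Lemma subfun_scaleDl v : {morph subfun_scale^~ v : a b / a + b}.
Proof. by move=> a b; apply: subfunE => x /=; rewrite scalerDl. Qed.

HB.instance Definition _ := GRing.Zmodule_isLmodule.Build C subfun
  subfun_scaleA subfun_scale1 subfun_scaleDr subfun_scaleDl.

Lemma fvalD (u v : subfun) x : fval (u + v) x = fval u x + fval v x. Proof. by []. Qed.
Lemma fvalZ a (u : subfun) x : fval (a *: u) x = a *: fval u x. Proof. by []. Qed.
Lemma fval0 x : fval (0 : subfun) x = 0. Proof. by []. Qed.

End SubspaceOfFunctions.

Section OmegaAction.
Variables (lam al : C) (h : {poly C}).
Local Notation F := (Fop al h).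
Local Notation G := (Gop al h).
Local Notation d := (omega_d lam al h).
Implicit Types (P Q : Omega) (f : {poly C}).

Lemma Fop_islin : islin F.
Proof. by move=> a f g; rewrite /Fop derivD derivZ -!mul_polyC; ring. Qed.

Lemma Gop_islin : islin G.
Proof. by move=> a f g; rewrite /Gop Fop_islin -!mul_polyC; ring. Qed.

Lemma Fop_mulX f : F ('X * f) = 'X * F f - f.
Proof. by rewrite /Fop derivM derivX mul1r; ring. Qed.

Lemma Gop_Fop_comm f : G (F f) = F (G f) + F f.
Proof.
rewrite /Gop (islinD Fop_islin (_ *: f)) (islinZ Fop_islin) Fop_mulX.
by rewrite -!mul_polyC; ring.
Qed.

Definition omega_term (m : int) (i : nat) f : Omega :=
  ('X - cst m%:~R) ^+ i *
  ('X * f%:P + ((m%:~R : C) *: G f - ((m ^+ 2)%:~R * al : C) *: F f)%:P).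

Lemma omega_term0 m i : omega_term m i 0 = 0.
Proof.
rewrite /omega_term (islin0 Fop_islin) (islin0 Gop_islin) !scaler0 subr0 !rmorph0.
by rewrite mulr0 addr0 mulr0.
Qed.

Lemma omega_termD m i f g : omega_term m i (f + g) = omega_term m i f + omega_term m i g.
Proof.
by rewrite /omega_term (islinD Fop_islin) (islinD Gop_islin) !scalerDr !rmorphD /=; ring.
Qed.

Lemma omega_term_polyCM m i a f :
  omega_term m i (a%:P * f) = cst a * omega_term m i f.
Proof.
rewrite /omega_term !mul_polyC (islinZ Fop_islin) (islinZ Gop_islin) !scalerA.
rewrite ![_ * a]mulrC -!scalerA -!scalerBr -!mul_polyC /cst !rmorphM /=; ring.
Qed.

Lemma omega_dE m P N : (size P <= N)%N ->
  d m P = cst (lam ^ m) * \sum_(i < N) omega_term m i P`_i.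
Proof.
move=> le_PN; congr (_ * _).
rewrite (big_ord_widen _ (fun i => omega_term m i P`_i) le_PN) big_mkcond /=.
apply: eq_bigr => i _; case: ifP => // /negbT; rewrite -leqNgt => le_Pi.
by rewrite nth_default // omega_term0.
Qed.

Lemma omega_dD m P Q : d m (P + Q) = d m P + d m Q.
Proof.
pose N := maxn (size P) (size Q).
rewrite (@omega_dE m (P + Q) N) ?(leq_trans (size_polyD _ _)) //.
rewrite (@omega_dE m P N) ?leq_maxl // (@omega_dE m Q N) ?leq_maxr //.
rewrite -mulrDr -big_split /=; congr (_ * _); apply: eq_bigr => i _.
by rewrite coefD omega_termD.
Qed.

Lemma omega_dC m a P : d m (cst a * P) = cst a * d m P.
Proof.
rewrite (@omega_dE m (cst a * P) (size P)); last by rewrite mul_polyC size_scale_leq.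
rewrite (@omega_dE m P (size P)) // mulrCA; congr (_ * _).
by rewrite mulr_sumr; apply: eq_bigr => i _; rewrite coefCM omega_term_polyCM.
Qed.

Lemma omega_d0 m : d m 0 = 0.
Proof. by have := omega_dC m 0 0; rewrite /cst !rmorph0 !mul0r. Qed.

Lemma omega_dN m P : d m (- P) = - d m P.
Proof. by apply/eqP; rewrite -subr_eq0 opprK -omega_dD addNr omega_d0. Qed.

Lemma omega_dB m P Q : d m (P - Q) = d m P - d m Q.
Proof. by rewrite omega_dD omega_dN. Qed.

Lemma omega_dX m P : d m ('X * P) = ('X - cst m%:~R) * d m P.
Proof.
rewrite (@omega_dE m ('X * P) (size P).+1); last first.
  by have [->|nzP] := eqVneq P 0; rewrite ?mulr0 ?size_poly0 // mulrC size_mulX.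
rewrite (@omega_dE m P (size P)) // big_ord_recl /= coefXM eqxx omega_term0 add0r.
rewrite mulrCA; congr (_ * _); rewrite mulr_sumr; apply: eq_bigr => i _.
by rewrite coefXM /= /omega_term /bump leq0n add0n add1n exprS mulrA.
Qed.

Lemma omega_dXsubC m a Q :
  d m (('X - cst a) * Q) = ('X - cst m%:~R) * d m Q - cst a * d m Q.
Proof. by rewrite mulrBl omega_dB omega_dX omega_dC. Qed.

Lemma omega_d_polyC m f : d m f%:P =
  cst (lam ^ m) * ('X * f%:P + ((m%:~R : C) *: G f - ((m ^+ 2)%:~R * al : C) *: F f)%:P).
Proof.
rewrite (@omega_dE m f%:P 1) ?size_polyC ?leq_b1 // big_ord1 /omega_term expr0 mul1r.
by rewrite coefC eqxx.
Qed.

Hypothesis lam_neq0 : lam != 0.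

Lemma omega_d_comm_polyC (i j : int) f :
  d i (d j f%:P) - d j (d i f%:P) = cst (j - i)%:~R * d (i + j) f%:P.
Proof.
rewrite !omega_d_polyC !omega_dC !omega_dD !omega_dX !omega_d_polyC.
rewrite !(islinB Gop_islin) !(islinB Fop_islin) !(islinZ Gop_islin) !(islinZ Fop_islin).
by rewrite Gop_Fop_comm expfzDr // /cst -!mul_polyC; ring.
Qed.

Lemma omega_d_comm (i j : int) P :
  d i (d j P) - d j (d i P) = cst (j - i)%:~R * d (i + j) P.
Proof.
elim/poly_ind: P => [|P c IH]; first by rewrite !omega_d0 subrr mulr0.
rewrite [P * 'X]mulrC !omega_dD !omega_dX !omega_dXsubC.
move/subr_eq_add: IH => ->; move/subr_eq_add: (omega_d_comm_polyC i j c) => ->.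
by rewrite /cst; ring.
Qed.

End OmegaAction.

Lemma poly_coef0_drop1 (R : nzRingType) (p : {poly R}) :
  p = 'X * drop_poly 1 p + (p`_0)%:P.
Proof.
rewrite -{1}(poly_take_drop 1 p) expr1 addrC commr_polyX; congr (_ + _).
by apply/polyP => i; rewrite coef_take_poly coefC; case: i.
Qed.

Lemma drop1_polyXM (R : nzRingType) (p : {poly R}) : drop_poly 1 ('X * p) = p.
Proof. by rewrite -commr_polyX -(expr1 'X) drop_polyMXn_id. Qed.

Section OmegaDegree.
Variables (lam al : C) (h : {poly C}).
Local Notation d := (omega_d lam al h).
Implicit Types (P Q : Omega) (f : {poly C}) (n : nat).

Lemma bmod_actE n a k f : (n < k)%N ->
  (bmod_act n a lam al h k f)%:P =
  d k f%:P - cst (lam ^+ (k - n)) * d n f%:P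
  + cst (aext n a k - lam ^+ (k - n) * aext n a n) * f%:P.
Proof.
move=> lt_nk; rewrite !omega_d_polyC -!exprnP /bmod_act.
have -> : lam ^+ k = lam ^+ (k - n) * lam ^+ n by rewrite -exprD subnK // ltnW.
by rewrite natrB ?(ltnW lt_nk) // /cst -!mul_polyC; ring.
Qed.

Lemma size_omega_d_polyC m f : (size (d m f%:P) <= 2)%N.
Proof.
rewrite omega_d_polyC mul_polyC (leq_trans (size_scale_leq _ _)) //.
rewrite (leq_trans (size_polyD _ _)) // geq_max size_polyC (leq_trans (leq_b1 _)) // andbT.
by rewrite (leq_trans (size_polyMleq _ _)) // size_polyX size_polyC; case: (_ != _).
Qed.

Lemma size_omega_d m P : (size (d m P) <= (size P).+1)%N.
Proof.
elim/poly_ind: P => [|P c IH]; first by rewrite omega_d0 size_poly0.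
have [->|nzP] := eqVneq P 0.
  rewrite mul0r add0r; have [->|nzc] := eqVneq c 0; first by rewrite omega_d0 size_poly0.
  by rewrite size_polyC nzc size_omega_d_polyC.
rewrite size_MXaddC (negbTE nzP) /= [P * 'X]mulrC omega_dD omega_dX.
rewrite (leq_trans (size_polyD _ _)) // geq_max; apply/andP; split.
  by rewrite (leq_trans (size_polyMleq _ _)) // size_XsubC.
by rewrite (leq_trans (size_omega_d_polyC m c)) // ltnS size_poly_gt0.
Qed.

Definition omega_d_tail n P := d n P - cst (lam ^+ n) * ('X * P).

Lemma omega_d_tailD n P Q : omega_d_tail n (P + Q) = omega_d_tail n P + omega_d_tail n Q.
Proof. by rewrite /omega_d_tail omega_dD; ring. Qed.

Lemma omega_d_tailC n a P : omega_d_tail n (cst a * P) = cst a * omega_d_tail n P.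
Proof. by rewrite /omega_d_tail omega_dC; ring. Qed.

Lemma omega_d_tail0 n : omega_d_tail n 0 = 0.
Proof. by rewrite /omega_d_tail omega_d0 !mulr0 subr0. Qed.

Lemma omega_d_tailX n P :
  omega_d_tail n ('X * P) = 'X * omega_d_tail n P - cst n%:R * d n P.
Proof. by rewrite /omega_d_tail omega_dX /cst; ring. Qed.

Lemma size_omega_d_tail_polyC n f : (size (omega_d_tail n f%:P) <= 1)%N.
Proof.
rewrite /omega_d_tail omega_d_polyC -exprnP mulrDr addrAC subrr add0r.
by rewrite /cst -polyCM size_polyC leq_b1.
Qed.

Lemma size_omega_d_tail n P : (size (omega_d_tail n P) <= size P)%N.
Proof.
elim/poly_ind: P => [|P c IH]; first by rewrite omega_d_tail0 size_poly0.
have [->|nzP] := eqVneq P 0.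
  rewrite mul0r add0r; have [->|nzc] := eqVneq c 0.
    by rewrite omega_d_tail0 size_poly0.
  by rewrite size_polyC nzc size_omega_d_tail_polyC.
rewrite size_MXaddC (negbTE nzP) /= [P * 'X]mulrC omega_d_tailD omega_d_tailX.
have P_gt0 : (0 < size P)%N by rewrite size_poly_gt0.
rewrite (leq_trans (size_polyD _ _)) // geq_max.
rewrite (leq_trans (size_omega_d_tail_polyC n c)) // andbT.
rewrite (leq_trans (size_polyD _ _)) // geq_max size_opp; apply/andP; split.
  by rewrite (leq_trans (size_polyMleq _ _)) // size_polyX.
by rewrite mul_polyC (leq_trans (size_scale_leq _ _)) // size_omega_d.
Qed.

End OmegaDegree.

Section OmegaHom.
Variable Z : lmodType C.

Definition omega_lin (phi : Omega -> Z) : Prop :=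
  (forall P Q, phi (P + Q) = phi P + phi Q) /\ (forall a P, phi (cst a * P) = a *: phi P).

Lemma omega_lin0 : omega_lin (fun _ => 0).
Proof. by split=> *; rewrite ?addr0 ?scaler0. Qed.

Lemma omega_linL a phi psi :
  omega_lin phi -> omega_lin psi -> omega_lin (fun P => a *: phi P + psi P).
Proof.
case=> phiD phiC [psiD psiC]; split=> *; rewrite ?phiD ?psiD ?phiC ?psiC.
  by rewrite scalerDr addrACA.
by rewrite scalerDr !scalerA mulrC.
Qed.

Definition omega_hom := subfun omega_lin0 omega_linL.

Lemma omega_homD (phi : omega_hom) P Q : fval phi (P + Q) = fval phi P + fval phi Q.
Proof. exact: (fvalP phi).1. Qed.

Lemma omega_homC (phi : omega_hom) a P : fval phi (cst a * P) = a *: fval phi P.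
Proof. exact: (fvalP phi).2. Qed.

Lemma omega_hom0 (phi : omega_hom) : fval phi 0 = 0.
Proof. by have := omega_homC phi 0 0; rewrite mulr0 scale0r. Qed.

Lemma omega_homB (phi : omega_hom) P Q : fval phi (P - Q) = fval phi P - fval phi Q.
Proof.
rewrite omega_homD -mulN1r (_ : -1 = cst (-1)) ?omega_homC ?scaleN1r //.
by rewrite /cst !rmorphN !rmorph1.
Qed.

End OmegaHom.

Section OmegaHomAction.
Variables (lam al : C) (h : {poly C}).
Local Notation d := (omega_d lam al h).
Variables (Z : lmodType C) (dZ : int -> Z -> Z) (cZ : Z -> Z).
Hypothesis vZ : vir_module dZ cZ.

Lemma omega_lin_d m (phi : omega_hom Z) :
  omega_lin (fun P => dZ m (fval phi P) - fval phi (d m P)).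
Proof.
have [dZ_lin _ _ _] := vZ; split=> [P Q|a P].
  by rewrite omega_dD !omega_homD (islinD (dZ_lin m)); module_ring.
by rewrite omega_dC !omega_homC (islinZ (dZ_lin m)) scalerBr.
Qed.

Lemma omega_lin_c (phi : omega_hom Z) : omega_lin (fun P => cZ (fval phi P)).
Proof.
have [_ cZ_lin _ _] := vZ; split=> [P Q|a P].
  by rewrite omega_homD (islinD cZ_lin).
by rewrite omega_homC (islinZ cZ_lin).
Qed.

Definition omega_hom_d m (phi : omega_hom Z) : omega_hom Z := SubFun (omega_lin_d m phi).
Definition omega_hom_c (phi : omega_hom Z) : omega_hom Z := SubFun (omega_lin_c phi).

Hypothesis lam_neq0 : lam != 0.

Lemma omega_hom_vir : vir_module omega_hom_d omega_hom_c.
Proof.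
have [dZ_lin cZ_lin dZ_comm cZ_comm] := vZ; split.
- move=> m a phi psi; apply: subfunE => P /=.
  by rewrite (dZ_lin m); module_ring.
- by move=> a phi psi; apply: subfunE => P /=; rewrite cZ_lin.
- move=> i j phi; apply: subfunE => P /=.
  have d_comm := omega_d_comm al h lam_neq0 i j P.
  rewrite !(islinB (dZ_lin _)) (subr_eq_add d_comm) omega_homD omega_homC.
  rewrite (subr_eq_add (dZ_comm i j (fval phi P))).
  by case: (i == - j); rewrite ?fvalD ?fvalZ ?fval0 /=; module_ring.
- by move=> i phi; apply: subfunE => P /=; rewrite (islinB cZ_lin) cZ_comm.
Qed.

End OmegaHomAction.

(* [Coind Y] realises [Hom_C(U(Vir), Y)]: functions on words in the generators
   ([Some i] for [d_i], [None] for [c], read left to right) that respect the defining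
   relations of [Vir] at every position; [Vir] acts by prepending a letter. *)
Definition word := seq (option int).

Section Coinduced.
Variable Y : lmodType C.

Definition coind_rel (psi : word -> Y) : Prop := forall u,
  (forall i j w, psi (u ++ Some j :: Some i :: w) - psi (u ++ Some i :: Some j :: w) =
     (j - i)%:~R *: psi (u ++ Some (i + j) :: w) +
     (if i == - j then ((i ^+ 3 - i)%:~R / 12%:R : C) *: psi (u ++ None :: w) else 0))
  /\ (forall i w, psi (u ++ Some i :: None :: w) = psi (u ++ None :: Some i :: w)).

Lemma coind_rel0 : coind_rel (fun _ => 0).
Proof.
by move=> u; split=> // i j w; rewrite subrr scaler0 add0r; case: ifP; rewrite ?scaler0.
Qed.

Lemma coind_relL a psi chi :
  coind_rel psi -> coind_rel chi -> coind_rel (fun w => a *: psi w + chi w).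
Proof.
move=> psi_rel chi_rel u; have [psi_d psi_c] := psi_rel u; have [chi_d chi_c] := chi_rel u.
split=> [i j w|i w]; last by rewrite psi_c chi_c.
by rewrite (subr_eq_add (psi_d i j w)) (subr_eq_add (chi_d i j w)); case: ifP => _; module_ring.
Qed.

Definition Coind := subfun coind_rel0 coind_relL.

Lemma coind_rel_cons (psi : Coind) o : coind_rel (fun w => fval psi (o :: w)).
Proof. by move=> u; exact: (fvalP psi (o :: u)). Qed.

Definition coind_d (i : int) (psi : Coind) : Coind := SubFun (coind_rel_cons psi (Some i)).
Definition coind_c (psi : Coind) : Coind := SubFun (coind_rel_cons psi None).

Lemma coind_vir : vir_module coind_d coind_c.
Proof.
split=> [m a phi psi|a phi psi|i j psi|i psi]; apply: subfunE => w //=.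
- have [psi_d _] := fvalP psi [::].
  by rewrite (subr_eq_add (psi_d i j w)); case: ifP => _ /=; module_ring.
- by have [_ psi_c] := fvalP psi [::]; exact: psi_c.
Qed.

Definition coind_eval (psi : Coind) : Y := fval psi [::].

Lemma coind_eval_lin : islin coind_eval. Proof. by []. Qed.

Section Lift.
Variables (Z : lmodType C) (dZ : int -> Z -> Z) (cZ : Z -> Z).
Hypothesis vZ : vir_module dZ cZ.
Variables (l : Z -> Y) (l_lin : islin l).

Fixpoint act_word (w : word) (z : Z) : Z :=
  match w with
  | [::] => z
  | Some i :: w' => act_word w' (dZ i z)
  | None :: w' => act_word w' (cZ z)
  end.

Lemma act_word_cat u w z : act_word (u ++ w) z = act_word w (act_word u z).
Proof. by elim: u z => [|[i|] u IH] z //=. Qed.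

Lemma act_word_lin w : islin (act_word w).
Proof.
have [dZ_lin cZ_lin _ _] := vZ.
by elim: w => [|[i|] w IH] a x y //=; rewrite ?dZ_lin ?cZ_lin IH.
Qed.

Lemma coind_rel_lift z : coind_rel (fun w => l (act_word w z)).
Proof.
have [_ _ dZ_comm cZ_comm] := vZ; have aw_lin := act_word_lin.
move=> u; split=> [i j w|i w]; rewrite !act_word_cat /=; last by rewrite cZ_comm.
rewrite -(islinB l_lin) -(islinB (aw_lin w)) dZ_comm (islinD (aw_lin w)) (islinZ (aw_lin w)).
rewrite (islinD l_lin) (islinZ l_lin).
by case: ifP => _; rewrite ?(islinZ (aw_lin w)) ?(islinZ l_lin) ?(islin0 (aw_lin w)) ?(islin0 l_lin).
Qed.

Definition coind_lift (z : Z) : Coind := SubFun (coind_rel_lift z).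

Lemma coind_lift_hom : vir_hom dZ cZ coind_d coind_c coind_lift.
Proof.
split=> [a x y|i z|z]; apply: subfunE => w //=.
by rewrite (act_word_lin w) l_lin.
Qed.

End Lift.
End Coinduced.

Section OmegaHomFunctor.
Variables (lam al : C) (h : {poly C}).
Variables (Z1 : lmodType C) (d1 : int -> Z1 -> Z1) (c1 : Z1 -> Z1).
Variables (Z2 : lmodType C) (d2 : int -> Z2 -> Z2) (c2 : Z2 -> Z2).
Hypotheses (v1 : vir_module d1 c1) (v2 : vir_module d2 c2).
Variables (g : Z1 -> Z2) (g_hom : vir_hom d1 c1 d2 c2 g).

Lemma omega_lin_comp (phi : omega_hom Z1) : omega_lin (fun P => g (fval phi P)).
Proof.
have [g_lin _ _] := g_hom; split=> [P Q|a P].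
  by rewrite omega_homD (islinD g_lin).
by rewrite omega_homC (islinZ g_lin).
Qed.

Definition omega_hom_comp (phi : omega_hom Z1) : omega_hom Z2 := SubFun (omega_lin_comp phi).

Lemma omega_hom_comp_hom :
  vir_hom (omega_hom_d lam al h v1) (omega_hom_c v1)
          (omega_hom_d lam al h v2) (omega_hom_c v2) omega_hom_comp.
Proof.
have [g_lin g_d g_c] := g_hom.
split=> [a phi psi|m phi|phi]; apply: subfunE => P /=; first by rewrite g_lin.
  by rewrite (islinB g_lin) g_d.
by rewrite g_c.
Qed.

End OmegaHomFunctor.

Section OmegaHomUniqueness.
Variables (lam al : C) (h : {poly C}) (n : nat).
Hypothesis lam_neq0 : lam != 0.
Local Notation d := (omega_d lam al h).
Variables (Z : lmodType C) (dZ : int -> Z -> Z) (cZ : Z -> Z).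
Hypothesis vZ : vir_module dZ cZ.
Local Notation hom_d := (omega_hom_d lam al h vZ).

(* Induction on the [s]-degree: [d_n] raises it by one, with leading part [lam^n s]. *)
Lemma omega_hom_eigen_eq0 (chi : omega_hom Z) b :
  (forall f, fval chi f%:P = 0) -> hom_d n chi = b *: chi -> chi = 0.
Proof.
have [dZ_lin _ _ _] := vZ.
move=> chi_const chi_d; apply: subfunE => P; rewrite fval0.
have chi_dE R : fval chi (d n R) = dZ n (fval chi R) - b *: fval chi R.
  by rewrite -[b *: _](congr1 (fval^~ R) chi_d) /=; module_ring.
elim: {P}(size P) {-2}P (leqnn (size P)) => [|N IH] P le_PN.
  by move: le_PN; rewrite leqn0 size_poly_eq0 => /eqP ->; rewrite omega_hom0.
rewrite (poly_coef0_drop1 P) omega_homD chi_const addr0.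
set Q := drop_poly 1 P.
have le_QN : (size Q <= N)%N by rewrite size_drop_poly; lia.
have le_tail : (size (omega_d_tail lam al h n Q) <= N)%N.
  exact: leq_trans (size_omega_d_tail _ _ _ _ _) le_QN.
apply: (@scalerI _ _ (lam ^+ n)); first by rewrite expf_neq0.
have -> : 'X * Q = cst (lam ^+ n)^-1 * (d n Q - omega_d_tail lam al h n Q).
  by rewrite /omega_d_tail opprB addrC subrK mulrA -rmorphM -polyCM mulVf ?expf_neq0 ?mul1r.
rewrite omega_homC scalerA mulfV ?expf_neq0 // scale1r omega_homB chi_dE !IH //.
by rewrite (islin0 (dZ_lin _)); module_ring.
Qed.

Lemma omega_hom_eq_polyC (phi psi : omega_hom Z) b :
  (forall f, fval phi f%:P = fval psi f%:P) ->
  hom_d n phi = b *: phi -> hom_d n psi = b *: psi -> phi = psi.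
Proof.
have [d_lin _ _ _] := omega_hom_vir al h vZ lam_neq0.
move=> eq_const phi_d psi_d; apply/eqP; rewrite -subr_eq0; apply/eqP.
apply: (@omega_hom_eigen_eq0 _ b) => [f|].
  by rewrite fvalD /= eq_const scaleN1r addrN.
by rewrite (islinB (d_lin n)) phi_d psi_d scalerBr.
Qed.

End OmegaHomUniqueness.

Section OmegaToInd.
Variables (n : nat) (a : nat -> C) (th lam al : C) (h : {poly C}).
Hypothesis lam_neq0 : lam != 0.
Local Notation d := (omega_d lam al h).
Local Notation tail := (omega_d_tail lam al h n).
Variables (M : lmodType C) (dM : int -> M -> M) (cM : M -> M) (iota : {poly C} -> M).
Hypotheses (vM : vir_module dM cM) (iota_gen : Ind_gen n a th lam al h dM cM iota).
Implicit Types (P Q : Omega) (f : {poly C}).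

Definition d_sub_a (k : nat) (z : M) := dM k z - aext n a k *: z.

Lemma d_sub_a_lin k : islin (d_sub_a k).
Proof. by have [dM_lin _ _ _] := vM; move=> b x y; rewrite /d_sub_a dM_lin; module_ring. Qed.

Lemma d_sub_a_comm k z : (n <= k)%N ->
  d_sub_a n (d_sub_a k z) - d_sub_a k (d_sub_a n z) =
  (k%:Z - n%:Z)%:~R *: d_sub_a (n + k) z.
Proof.
have [dM_lin _ dM_comm _] := vM; move=> le_nk.
have := dM_comm n k z; rewrite -PoszD.
have -> : (if Posz n == - Posz k then ((Posz n ^+ 3 - Posz n)%:~R / 12%:R : C) *: cM z else 0) = 0.
  case: eqP => // nk0; have n0 : n = 0%N by lia.
  by rewrite n0 /= mul0r scale0r.
rewrite addr0 /d_sub_a !(islinB (dM_lin _)) !(islinZ (dM_lin _)) => /subr_eq_add ->.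
move: le_nk; rewrite leq_eqVlt => /orP [/eqP <-|lt_nk]; first by rewrite subrr; module_ring.
by rewrite [aext _ _ (_ + _)]/aext ifF; [module_ring | apply/negbTE; rewrite -ltnNge; lia].
Qed.

(* The image of [P ⊗ w], by recursion on the [s]-degree: since
   [d_n Q = lam^n s Q + tail Q] with [tail Q] of degree at most that of [Q], the relation
   [d_n (Q ⊗ w) = d_n Q ⊗ w + a_n (Q ⊗ w)] forces the value on [s Q]. *)
Fixpoint omega_to_ind_fuel (N : nat) P : M :=
  if N is N'.+1 then
    iota P`_0 + (lam ^+ n)^-1 *: (d_sub_a n (omega_to_ind_fuel N' (drop_poly 1 P))
                                  - omega_to_ind_fuel N' (tail (drop_poly 1 P)))
  else 0.

Lemma omega_to_ind_fuel_succ N P : omega_to_ind_fuel N.+1 P =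
  iota P`_0 + (lam ^+ n)^-1 *: (d_sub_a n (omega_to_ind_fuel N (drop_poly 1 P))
                                - omega_to_ind_fuel N (tail (drop_poly 1 P))).
Proof. by []. Qed.

Definition omega_to_ind P := omega_to_ind_fuel (size P) P.

Lemma iota_lin : islin iota. Proof. by case: iota_gen. Qed.

Lemma omega_to_ind_fuelS N P :
  (size P <= N)%N -> omega_to_ind_fuel N.+1 P = omega_to_ind_fuel N P.
Proof.
elim: N P => [|N IH] P le_PN.
  move: le_PN; rewrite leqn0 size_poly_eq0 => /eqP -> /=.
  by rewrite coef0 (islin0 iota_lin) (islin0 (d_sub_a_lin n)) subrr scaler0 addr0.
have le_drop : (size (drop_poly 1 P) <= N)%N by rewrite size_drop_poly; lia.
have le_tail : (size (tail (drop_poly 1 P)) <= N)%N.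
  exact: leq_trans (size_omega_d_tail _ _ _ _ _) le_drop.
by rewrite omega_to_ind_fuel_succ (IH (drop_poly 1 P)) // (IH (tail _)).
Qed.

Lemma omega_to_indE N P : (size P <= N)%N -> omega_to_ind P = omega_to_ind_fuel N P.
Proof.
move=> le_PN; rewrite /omega_to_ind -(subnK le_PN).
elim: (N - size P)%N => // k IH.
by rewrite addSn omega_to_ind_fuelS ?IH // leq_addl.
Qed.

Lemma omega_to_ind_fuel_lin N :
  (forall P Q, omega_to_ind_fuel N (P + Q) = omega_to_ind_fuel N P + omega_to_ind_fuel N Q) /\
  (forall b P, omega_to_ind_fuel N (cst b * P) = b *: omega_to_ind_fuel N P).
Proof.
elim: N => [|N [IHD IHC]]; first by split=> *; rewrite /= ?addr0 ?scaler0.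
split=> [P Q|b P] /=.
  rewrite coefD (islinD iota_lin) drop_polyD omega_d_tailD !IHD (islinD (d_sub_a_lin n)).
  by module_ring.
have -> : drop_poly 1 (cst b * P) = cst b * drop_poly 1 P by rewrite !mul_polyC drop_polyZ.
rewrite coefCM mul_polyC (islinZ iota_lin) omega_d_tailC !IHC (islinZ (d_sub_a_lin n)).
by module_ring.
Qed.

Local Notation phi := omega_to_ind.

Lemma omega_to_indD P Q : phi (P + Q) = phi P + phi Q.
Proof.
pose N := maxn (size P) (size Q).
rewrite (@omega_to_indE N (P + Q)) ?(leq_trans (size_polyD _ _)) //.
rewrite (@omega_to_indE N P) ?leq_maxl // (@omega_to_indE N Q) ?leq_maxr //.
exact: (omega_to_ind_fuel_lin N).1.
Qed.

Lemma omega_to_indC b P : phi (cst b * P) = b *: phi P.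
Proof.
rewrite (@omega_to_indE (size P) (cst b * P)) ?mul_polyC ?size_scale_leq //.
by rewrite -mul_polyC (omega_to_ind_fuel_lin _).2.
Qed.

Lemma omega_to_indB P Q : phi (P - Q) = phi P - phi Q.
Proof.
rewrite omega_to_indD -mulN1r (_ : -1 = cst (-1)) ?omega_to_indC ?scaleN1r //.
by rewrite /cst !rmorphN !rmorph1.
Qed.

Lemma omega_to_ind_polyC f : phi f%:P = iota f.
Proof.
rewrite (@omega_to_indE 1) ?size_polyC ?leq_b1 // omega_to_ind_fuel_succ coefC eqxx /=.
by rewrite (islin0 (d_sub_a_lin n)) subrr scaler0 addr0.
Qed.

Lemma omega_to_indX Q : phi ('X * Q) = (lam ^+ n)^-1 *: (d_sub_a n (phi Q) - phi (tail Q)).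
Proof.
rewrite (@omega_to_indE (size Q).+1); last first.
  by have [->|nzQ] := eqVneq Q 0; rewrite ?mulr0 ?size_poly0 // -commr_polyX size_mulX.
rewrite omega_to_ind_fuel_succ coefXM eqxx (islin0 iota_lin) add0r drop1_polyXM.
by rewrite -omega_to_indE // -omega_to_indE ?size_omega_d_tail.
Qed.

Lemma omega_to_ind_dn P : phi (d n P) = d_sub_a n (phi P).
Proof.
have -> : d n P = tail P + cst (lam ^+ n) * ('X * P) by rewrite /omega_d_tail subrK.
rewrite omega_to_indD omega_to_indC omega_to_indX scalerA mulfV ?expf_neq0 // scale1r.
by module_ring.
Qed.

Lemma omega_to_ind_d_polyC k f : (n <= k)%N -> phi (d k f%:P) = d_sub_a k (iota f).
Proof.
rewrite leq_eqVlt => /orP [/eqP <-|lt_nk]; first by rewrite omega_to_ind_dn omega_to_ind_polyC.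
have -> : d k f%:P = (bmod_act n a lam al h k f)%:P + cst (lam ^+ (k - n)) * d n f%:P
   - cst (aext n a k - lam ^+ (k - n) * aext n a n) * f%:P by rewrite bmod_actE //; ring.
rewrite omega_to_indB omega_to_indD (omega_to_indC _ (d n _)) (omega_to_indC _ f%:P).
rewrite omega_to_ind_dn !omega_to_ind_polyC.
have [_ iota_b _] := iota_gen.
by rewrite iota_b // /d_sub_a; module_ring.
Qed.

Lemma omega_d_tail_comm (k : nat) Q :
  tail (d k Q) = d k (tail Q) + cst (k%:Z - n%:Z)%:~R * d (n + k)%N Q
                 - cst (lam ^+ n * k%:R) * d k Q.
Proof.
rewrite /omega_d_tail omega_dB omega_dC omega_dX PoszD.
move/subr_eq_add: (omega_d_comm al h lam_neq0 n k Q) => ->.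
by rewrite /cst; ring.
Qed.

Lemma omega_to_ind_dX N k Q :
  (forall P, (size P <= N)%N -> forall k, (n <= k)%N -> phi (d k P) = d_sub_a k (phi P)) ->
  (size Q <= N)%N -> (n <= k)%N -> phi (d k ('X * Q)) = d_sub_a k (phi ('X * Q)).
Proof.
move=> IH le_QN le_nk.
have le_tail : (size (tail Q) <= N)%N by exact: leq_trans (size_omega_d_tail _ _ _ _ _) le_QN.
have lamn_neq0 : lam ^+ n != 0 by rewrite expf_neq0.
rewrite omega_dX mulrBl omega_to_indB (omega_to_indC _ (d k Q)) !omega_to_indX.
rewrite omega_d_tail_comm omega_to_indB omega_to_indD.
rewrite (omega_to_indC _ (d (n + k)%N Q)) (omega_to_indC _ (d k Q)) !IH ?leq_addr //.
rewrite (islinZ (d_sub_a_lin k)) (islinB (d_sub_a_lin k)).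
move/subr_eq_add: (d_sub_a_comm (phi Q) le_nk) => ->.
rewrite -[k%:R *: d_sub_a k (phi Q)]scale1r -(mulVf lamn_neq0) -scalerA.
by module_ring.
Qed.

Lemma omega_to_ind_d k P : (n <= k)%N -> phi (d k P) = d_sub_a k (phi P).
Proof.
elim: {P}(size P) {-2}P (leqnn (size P)) k => [|N IH] P le_PN k le_nk.
  move: le_PN; rewrite leqn0 size_poly_eq0 => /eqP ->.
  by rewrite omega_d0 /omega_to_ind size_poly0 (islin0 (d_sub_a_lin k)).
rewrite (poly_coef0_drop1 P) omega_dD !omega_to_indD (islinD (d_sub_a_lin k)).
rewrite omega_to_ind_d_polyC // omega_to_ind_polyC (omega_to_ind_dX IH) //.
by rewrite size_drop_poly; lia.
Qed.

Lemma omega_to_ind_c P : cM (phi P) = th *: phi P.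
Proof.
have [dM_lin cM_lin _ cM_comm] := vM; have [_ _ iota_c] := iota_gen.
rewrite /omega_to_ind; move: (size P) => N; elim: N P => [|N IH] P /=.
  by rewrite (islin0 cM_lin) scaler0.
rewrite (islinD cM_lin) (islinZ cM_lin) (islinB cM_lin) iota_c IH /d_sub_a.
by rewrite (islinB cM_lin) (islinZ cM_lin) cM_comm IH (islinZ (dM_lin _)); module_ring.
Qed.

End OmegaToInd.

Section BilinearToHom.
Variables (lam al : C) (h : {poly C}).
Hypothesis lam_neq0 : lam != 0.
Local Notation d := (omega_d lam al h).
Variables (V : lmodType C) (dV : int -> V -> V) (cV : V -> V).
Hypothesis vV : vir_module dV cV.
Variables (Y : lmodType C) (g : Omega -> V -> Y).
Hypothesis g_bilin : om_bilin g.

Fixpoint bilin_act (w : word) P v : Y :=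
  match w with
  | [::] => g P v
  | Some i :: w' => bilin_act w' (d i P) v + bilin_act w' P (dV i v)
  | None :: w' => bilin_act w' P (cV v)
  end.

Lemma bilin_act_bilin w : om_bilin (bilin_act w).
Proof.
have [dV_lin cV_lin _ _] := vV.
elim: w => [|[i|] w [IHD IHC IHDr IHZr]] //=; split.
- by move=> P Q v; rewrite omega_dD !IHD; module_ring.
- by move=> b P v; rewrite omega_dC !IHC; module_ring.
- by move=> P u x; rewrite (islinD (dV_lin i)) !IHDr; module_ring.
- by move=> b P v; rewrite (islinZ (dV_lin i)) !IHZr; module_ring.
- by move=> P Q v; rewrite IHD.
- by move=> b P v; rewrite IHC.
- by move=> P u x; rewrite (islinD cV_lin) IHDr.
- by move=> b P v; rewrite (islinZ cV_lin) IHZr.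
Qed.

Lemma coind_rel_bilin_act P v : coind_rel (fun w => bilin_act w P v).
Proof.
have [dV_lin cV_lin dV_comm cV_comm] := vV.
move=> u; elim: u P v => [|[i|] u IH] P v /=; last exact: IH.
  split=> [i j w|i w] /=; last by rewrite cV_comm.
  have [actD actC actDr actZr] := bilin_act_bilin w.
  have act0 : bilin_act w P 0 = 0 by have := actZr 0 P 0; rewrite !scale0r.
  rewrite (subr_eq_add (omega_d_comm al h lam_neq0 i j P)) (subr_eq_add (dV_comm i j v)).
  rewrite actD actC !actDr actZr.
  by case: (i == - j); rewrite ?actZr ?act0; module_ring.
have [IHd IHc] := IH (d i P) v; have [IHd' IHc'] := IH P (dV i v).
split=> [i0 j w|i0 w]; last by rewrite IHc IHc'.
rewrite (subr_eq_add (IHd i0 j w)) (subr_eq_add (IHd' i0 j w)).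
by case: (i0 == - j); module_ring.
Qed.

Definition bilin_coind P v : Coind Y := SubFun (coind_rel_bilin_act P v).

Lemma omega_lin_bilin_coind v : omega_lin (fun P => bilin_coind P v).
Proof.
split=> [P Q|b P]; apply: subfunE => w /=; have [actD actC _ _] := bilin_act_bilin w.
  exact: actD.
exact: actC.
Qed.

Definition bilin_hom v : omega_hom (Coind Y) := SubFun (omega_lin_bilin_coind v).

Lemma bilin_hom_hom :
  vir_hom dV cV (omega_hom_d lam al h (coind_vir Y)) (omega_hom_c (coind_vir Y)) bilin_hom.
Proof.
split=> [b u x|m v|v]; apply: subfunE => P; apply: subfunE => w //=.
  by have [_ _ actDr actZr] := bilin_act_bilin w; rewrite actDr actZr.
by module_ring.
Qed.

End BilinearToHom.

Section TensorProduct.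
Variables (n : nat) (a : nat -> C) (th lam al : C) (h : {poly C}).
Hypothesis lam_neq0 : lam != 0.
Local Notation d := (omega_d lam al h).
Variables (V : lmodType C) (dV : int -> V -> V) (cV : V -> V) (w : V).
Hypothesis V_univ : is_Va n a th dV cV w.
Variables (M : lmodType C) (dM : int -> M -> M) (cM : M -> M) (iota : {poly C} -> M).
Hypothesis M_univ : is_Ind n a th lam al h dM cM iota.

Let vV : vir_module dV cV. Proof. by case: V_univ. Qed.
Let w_gen : Va_gen n a th dV cV w. Proof. by case: V_univ. Qed.
Let vM : vir_module dM cM. Proof. by case: M_univ. Qed.
Let iota_gen : Ind_gen n a th lam al h dM cM iota. Proof. by case: M_univ. Qed.

Local Notation phi := (omega_to_ind n a lam al h dM iota).

Lemma omega_lin_omega_to_ind : omega_lin phi.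
Proof.
split; [exact: (omega_to_indD lam_neq0 vM iota_gen) | exact: (omega_to_indC lam_neq0 vM iota_gen)].
Qed.

Definition omega_to_ind_hom : omega_hom M := SubFun omega_lin_omega_to_ind.

Lemma omega_to_ind_hom_Va_gen :
  Va_gen n a th (omega_hom_d lam al h vM) (omega_hom_c vM) omega_to_ind_hom.
Proof.
have d_sub_aE k P : (n <= k)%N -> phi (d k P) = dM k (phi P) - aext n a k *: phi P.
  exact: (omega_to_ind_d lam_neq0 vM iota_gen).
split=> [k /andP [le_nk le_k2n]|k lt_2nk|]; apply: subfunE => P /=.
- by rewrite d_sub_aE // /aext le_k2n; module_ring.
- by rewrite d_sub_aE ?(leq_trans _ (ltnW lt_2nk)) ?leq_pmull // /aext leqNgt lt_2nk; module_ring.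
- exact: (omega_to_ind_c vM iota_gen).
Qed.

Lemma exists_tensor_hom : exists f : V -> omega_hom M,
  vir_hom dV cV (omega_hom_d lam al h vM) (omega_hom_c vM) f /\ f w = omega_to_ind_hom.
Proof.
have [_ _ V_ump] := V_univ.
by have [] := V_ump _ _ _ _ (omega_hom_vir al h vM lam_neq0) omega_to_ind_hom_Va_gen.
Qed.

Lemma bilin_Ind_gen (Y : lmodType C) (g : Omega -> V -> Y) (g_bilin : om_bilin g) :
  Ind_gen n a th lam al h (@coind_d Y) (@coind_c Y)
    (fun f => fval (bilin_hom al h lam_neq0 vV g_bilin w) f%:P).
Proof.
have [w_d w_d0 w_c] := w_gen.
have w_aext k : (n <= k)%N -> dV k w = aext n a k *: w.
  rewrite /aext => le_nk; case: ifP => le_k2n; first by rewrite w_d // le_nk.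
  by rewrite scale0r w_d0 // ltnNge le_k2n.
split=> [b f1 f2|k f lt_nk|f].
- by rewrite polyCD -mul_polyC polyCM omega_homD omega_homC.
- rewrite bmod_actE // omega_homD omega_homB (omega_homC _ _ (d n _)) (omega_homC _ _ f%:P).
  apply: subfunE => u /=; have [_ _ _ actZr] := bilin_act_bilin lam al h vV g_bilin u.
  by rewrite (w_aext k (ltnW lt_nk)) (w_aext n (leqnn n)) !actZr; module_ring.
- apply: subfunE => u /=; have [_ _ _ actZr] := bilin_act_bilin lam al h vV g_bilin u.
  by rewrite w_c actZr.
Qed.

Section TensorMap.
Variable f : V -> omega_hom M.
Hypotheses (f_hom : vir_hom dV cV (omega_hom_d lam al h vM) (omega_hom_c vM) f)
           (f_w : f w = omega_to_ind_hom).

Definition tensor_map P v := fval (f v) P.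

Lemma tensor_map_bilin : om_bilin tensor_map.
Proof.
have [f_lin _ _] := f_hom; rewrite /tensor_map.
split=> [P Q v|b P v|P u x|b P v]; rewrite ?omega_homD ?omega_homC //.
  by rewrite (islinD f_lin).
by rewrite (islinZ f_lin).
Qed.

Lemma tensor_map_d m P v :
  dM m (tensor_map P v) = tensor_map (d m P) v + tensor_map P (dV m v).
Proof. by have [_ f_d _] := f_hom; rewrite /tensor_map f_d /=; module_ring. Qed.

Lemma tensor_map_c P v : cM (tensor_map P v) = tensor_map (omega_c P) v + tensor_map P (cV v).
Proof. by have [_ _ f_c] := f_hom; rewrite /tensor_map f_c /= omega_hom0 add0r. Qed.

Lemma tensor_map_polyC_w q : tensor_map q%:P w = iota q.
Proof. by rewrite /tensor_map f_w /= (omega_to_ind_polyC lam_neq0 vM iota_gen). Qed.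

Lemma tensor_map_factor (Y : lmodType C) (g : Omega -> V -> Y) : om_bilin g ->
  exists g' : M -> Y, islin g' /\ forall P v, g' (tensor_map P v) = g P v.
Proof.
move=> g_bilin; have [_ _ M_ump] := M_univ; have [_ _ V_ump] := V_univ.
have [[G [G_hom G_iota]] _] := M_ump _ _ _ _ (coind_vir Y) (bilin_Ind_gen g_bilin).
exists (fun x => coind_eval (G x)); split.
  by have [G_lin _ _] := G_hom; exact: islin_comp G_lin (@coind_eval_lin Y).
have g_hom := bilin_hom_hom al h lam_neq0 vV g_bilin.
have Gf_hom := omega_hom_comp_hom lam al h vM (coind_vir Y) G_hom.
have [_ V_uniq] :=
  V_ump _ _ _ _ (omega_hom_vir al h (coind_vir Y) lam_neq0) (Va_gen_hom g_hom w_gen).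
have Gf_eq v : omega_hom_comp G_hom (f v) = bilin_hom al h lam_neq0 vV g_bilin v.
  apply: (V_uniq _ _ (vir_hom_comp f_hom Gf_hom) g_hom) => //.
  rewrite f_w; apply: (omega_hom_eq_polyC lam_neq0 (vZ := coind_vir Y) (n := n) (b := a n)).
  - by move=> q /=; rewrite (omega_to_ind_polyC lam_neq0 vM iota_gen) G_iota.
  - by have [w_d _ _] := Va_gen_hom Gf_hom omega_to_ind_hom_Va_gen; apply: w_d; lia.
  - by have [w_d _ _] := Va_gen_hom g_hom w_gen; apply: w_d; lia.
by move=> P v; have := congr1 (fun u => fval (fval u P) [::]) (Gf_eq v).
Qed.

Lemma tensor_map_factor_uniq (Y : lmodType C) (g1 g2 : M -> Y) :
  islin g1 -> islin g2 -> (forall P v, g1 (tensor_map P v) = g2 (tensor_map P v)) ->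
  forall x, g1 x = g2 x.
Proof.
move=> g1_lin g2_lin eq_g x; have [_ _ M_ump] := M_univ.
have eq_words u P v :
    g1 (act_word dM cM u (tensor_map P v)) = g2 (act_word dM cM u (tensor_map P v)).
  elim: u P v => [|[i|] u IH] P v /=; first exact: eq_g.
    by rewrite tensor_map_d !(islinD (act_word_lin vM u)) (islinD g1_lin) (islinD g2_lin) !IH.
  by rewrite tensor_map_c /omega_c /tensor_map omega_hom0 add0r IH.
have [_ lift_uniq] :=
  M_ump _ _ _ _ (coind_vir Y) (Ind_gen_hom (coind_lift_hom vM g1_lin) iota_gen).
have lift_eq : coind_lift vM g1_lin x = coind_lift vM g2_lin x.
  apply: (lift_uniq _ _ (coind_lift_hom vM g1_lin) (coind_lift_hom vM g2_lin)) => // q.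
  by apply: subfunE => u /=; rewrite -tensor_map_polyC_w eq_words.
exact: (congr1 (fval^~ [::]) lift_eq).
Qed.

Lemma tensor_map_is_tensor : is_tensor tensor_map.
Proof.
split=> [|Y g g_bilin]; first exact: tensor_map_bilin.
split; first exact: tensor_map_factor.
move=> g1 g2 g1_lin g2_lin g1_eq g2_eq.
by apply: tensor_map_factor_uniq => // P v; rewrite g1_eq g2_eq.
Qed.

End TensorMap.
End TensorProduct.

Theorem theorem5p2 (n : nat) (a : nat -> C) (th lam al xi eta : C) :
  lam != 0 -> al != 0 -> xi != 0 ->
  forall (V : lmodType C) (dV : int -> V -> V) (cV : V -> V) (w : V),
  is_Va n a th dV cV w ->
  forall (M : lmodType C) (dM : int -> M -> M) (cM : M -> M) (iota : {poly C} -> M),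
  is_Ind n a th lam al (xi *: 'X + eta%:P) dM cM iota ->
  exists beta : Omega -> V -> M,
    [/\ is_tensor beta,
        forall (m : int) P v,
          dM m (beta P v) = beta (omega_d lam al (xi *: 'X + eta%:P) m P) v + beta P (dV m v)
      & forall P v, cM (beta P v) = beta (omega_c P) v + beta P (cV v)].
Proof.
move=> lam_neq0 _ _ V dV cV w V_univ M dM cM iota M_univ.
have [f [f_hom f_w]] := exists_tensor_hom lam_neq0 V_univ M_univ.
exists (tensor_map f); split.
- exact: tensor_map_is_tensor f_hom f_w.
- exact: tensor_map_d f_hom.
- exact: tensor_map_c f_hom.
Qed.
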